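(* Let $d\ge3$, $n\ge1$ and $0\le c<\frac1{d(d-1)}$. For $\epsilon\ge0$ with $c+\epsilon\le\frac1{d(d-1)}$ let $$\rho(c,\epsilon)=\Big(\frac1{2d}-\frac{d-1}2(c+\epsilon)\Big)\sum_{i=0}^{d-1}|ii\rangle\langle ii|+\Big(\frac1{d(d-1)}+\epsilon\Big)\sum_{i<j}|\psi^-_{ij}\rangle\langle\psi^-_{ij}|+c\sum_{i<j}|\psi^+_{ij}\rangle\langle\psi^+_{ij}|.$$ Then there exists $\epsilon_0=\epsilon_0(c,n)>0$ such that for all $0\le\epsilon\le\epsilon_0$, $\rho(c,\epsilon)$ is pseudo $n$-copy undistillable, i.e. $\langle\psi|(\rho(c,\epsilon)^{PT})^{\otimes n}|\psi\rangle\ge0$ for every $|\psi\rangle\in(\mathbb{C}^d)^{\otimes n}_A\otimes(\mathbb{C}^d)^{\otimes n}_B$ of Schmidt rank two.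
   Context: $|\psi^{\pm}_{ij}\rangle=\frac1{\sqrt2}(|ij\rangle\pm|ji\rangle)$, sums over $0\le i<j\le d-1$. $\rho^{PT}$ is the partial transpose on the second factor of $\mathbb{C}^d\otimes\mathbb{C}^d$. The space $(\mathbb{C}^d\otimes\mathbb{C}^d)^{\otimes n}$ is regarded as bipartite with the first factor of each copy belonging to $A$; Schmidt rank is with respect to this bipartition. *)

From HB Require Import structures.
From mathcomp Require Import all_boot all_order all_algebra.
From mathcomp Require Export complex.
Set Implicit Arguments. Unset Strict Implicit. Unset Printing Implicit Defensive.
Import Order.TTheory GRing.Theory Num.Theory.
Local Open Scope ring_scope.

Section Defs.
Variable (R : rcfType) (d : nat).
Local Notation C := R[i].

Definition rC (x : R) : C := Complex x 0.

(* basis index of C^d (x) C^d : pairs (first factor, second factor) *)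
Definition pidx := ('I_d * 'I_d)%type.

Definition vec2 := pidx -> C.
Definition op2 := pidx -> pidx -> C.

Definition ket (i j : 'I_d) : vec2 := fun x => ((x == (i, j)) : bool)%:R.

Definition psiP (i j : 'I_d) : vec2 := fun x => (ket i j x + ket j i x) / sqrtC 2.
Definition psiM (i j : 'I_d) : vec2 := fun x => (ket i j x - ket j i x) / sqrtC 2.

Definition proj (v : vec2) : op2 := fun x y => v x * (v y)^*.

Definition rho (c eps : R) : op2 := fun x y =>
  (rC (1 / (2 * d%:R) - (d%:R - 1) / 2 * (c + eps))
     * \sum_(i < d) proj (ket i i) x y)
  + (rC (1 / (d%:R * (d%:R - 1)) + eps)
     * \sum_(i < d) \sum_(j < d | (i < j)%N) proj (psiM i j) x y)
  + (rC c * \sum_(i < d) \sum_(j < d | (i < j)%N) proj (psiP i j) x y).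

Definition ptrans (X : op2) : op2 := fun x y => X (x.1, y.2) (y.1, x.2).

(* index of (C^d (x) C^d)^{(x) n} split as A-part and B-part:
   a : 'I_n -> 'I_d gives the first factors of each copy, b the second ones *)
Definition tidx (n : nat) := {ffun 'I_n -> 'I_d}.

(* matrix entries of X^{(x) n}, with the k-th copy having row (a k, b k)
   and column (a' k, b' k) *)
Definition tensor_pow (n : nat) (X : op2) (a b a' b' : tidx n) : C :=
  \prod_(k < n) X (a k, b k) (a' k, b' k).

(* a vector psi in (C^d)^{(x)n}_A (x) (C^d)^{(x)n}_B, given by coefficients
   psi a b; <psi| X^{(x)n} |psi> *)
Definition expval (n : nat) (X : op2) (psi : tidx n -> tidx n -> C) : C :=
  \sum_(a : tidx n) \sum_(b : tidx n) \sum_(a' : tidx n) \sum_(b' : tidx n)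
    (psi a b)^* * tensor_pow X a b a' b' * psi a' b'.

(* Schmidt rank w.r.t. the A|B bipartition = rank of the coefficient matrix *)
Definition schmidt_rank (n : nat) (psi : tidx n -> tidx n -> C) : nat :=
  \rank (\matrix_(i < #|tidx n|, j < #|tidx n|) psi (enum_val i) (enum_val j)).

End Defs.

Arguments rho {R} d c eps _ _.

From HB Require Import structures.
From mathcomp Require Import all_boot all_order all_algebra.
From mathcomp Require Import complex.
From mathcomp Require Import ring lra.
Import Order.TTheory GRing.Theory Num.Theory.
Local Open Scope ring_scope.

(* Let a, b be the weights of the |ii> and |psi^-> parts of rho(c,eps).  As a real
   matrix, rho^PT = (b+c)/2 1 + (a-c) P + (c-b)/2 d|Phi+><Phi+|, with P the projector
   onto span{|ii>}.  It is a real combination sum_r w_r |v_r><v_r| of six families of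
   real vectors (see [tvec]) in which only d|Phi+><Phi+| gets a negative weight,
   of size O(eps), while the product-vector families keep weights >= eta > 0
   uniformly in eps.  Hence <psi|(rho^PT)^(x)n|psi> = sum_t prod_k w_(t_k) |<v_t|psi>|^2.
   If psi has Schmidt rank <= 2, so has its contraction with a product vector on one
   copy, and the product families capture a third of |psi|^2: the only obstruction is
   the diagonal part, controlled by |sum_i <ii|psi|^2 <= 2 |psi|^2.  So the all-product
   tuples contribute >= (eta/3)^n |psi|^2, and the negative terms cost at most
   eps sum_t |v_t|^2 |psi|^2, which is smaller for eps small enough. *)

Set Implicit Arguments.
Unset Strict Implicit.

Lemma sumr2D (V : nmodType) (I J : finType) (F G : I -> J -> V) :
  \sum_i \sum_j (F i j + G i j) = \sum_i \sum_j F i j + \sum_i \sum_j G i j.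
Proof. by rewrite -big_split; apply: eq_bigr => i _; rewrite big_split. Qed.

Lemma sumr2Z (R : pzSemiRingType) (I J : finType) (a : R) (F : I -> J -> R) :
  \sum_i \sum_j a * F i j = a * \sum_i \sum_j F i j.
Proof. by rewrite mulr_sumr; apply: eq_bigr => i _; rewrite mulr_sumr. Qed.

Lemma sumr_const_ord (R : pzSemiRingType) (n : nat) (a : R) :
  \sum_(i < n) a = n%:R * a.
Proof. by rewrite sumr_const card_ord mulr_natl. Qed.

Lemma sqr_sumr (R : comPzSemiRingType) (I : finType) (f : I -> R) :
  (\sum_i f i) ^+ 2 = \sum_i \sum_j f i * f j.
Proof. by rewrite expr2 big_distrlr. Qed.

Lemma sumr2_sym_avg (R : numFieldType) (I : finType) (A : I -> I -> R) :
  \sum_i \sum_j (A i j + A j i) / 2 = \sum_i \sum_j A i j.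
Proof.
rewrite (eq_bigr (fun i => (\sum_j A i j + \sum_j A j i) / 2)); last first.
  by move=> i _; rewrite -mulr_suml big_split.
by rewrite -mulr_suml big_split /= [X in _ + X]exchange_big /=; field.
Qed.

Lemma sum_sqr_diff (R : comPzRingType) (n : nat) (f : 'I_n -> R) :
  \sum_i \sum_j (f i - f j) ^+ 2 = 2 * n%:R * \sum_i f i ^+ 2 - 2 * (\sum_i f i) ^+ 2.
Proof.
rewrite (eq_bigr (fun i => \sum_j (f i ^+ 2 + f j ^+ 2 + (-2) * (f i * f j)))); last first.
  by move=> i _; apply: eq_bigr => j _; ring.
rewrite !sumr2D sumr2Z sqr_sumr.
rewrite (eq_bigr (fun i => n%:R * f i ^+ 2)); last by move=> i _; rewrite sumr_const_ord.
rewrite [X in _ + X + _](eq_bigr (fun i => \sum_j f j ^+ 2)) // sumr_const_ord -mulr_sumr.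
ring.
Qed.

(** * The real matrix of rho(c,eps)^PT and its decomposition *)

Section BasisAlgebra.
Variables (R : numFieldType) (d : nat).
Implicit Types (i j : 'I_d) (x y : pidx d).

Definition kdelta i j : R := (i == j)%:R.

Ltac kdelta_cases :=
  rewrite /kdelta;
  repeat match goal with p : pidx _ |- _ => case: p => ? ? end; rewrite /=;
  repeat match goal with
  | H : ?a <> ?a |- _ => exfalso; exact: H
  | |- context[?a == ?b] => case: (@eqP _ a b) => [?|?]; subst
  end; rewrite /=.

Ltac kdelta_split i j := rewrite /kdelta; case: (eqVneq i j) => [?|?]; subst; rewrite ?eqxx /=.

Lemma sum_kdelta i (F : 'I_d -> R) : \sum_j kdelta i j * F j = F i.
Proof.
rewrite (bigD1 i) //= /kdelta eqxx mul1r big1 ?addr0 // => j /negbTE.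
by rewrite eq_sym => ->; rewrite mul0r.
Qed.

Lemma sum_kdelta_diag (G : 'I_d -> 'I_d -> R) :
  \sum_i \sum_j kdelta i j * G i j = \sum_i G i i.
Proof. by apply: eq_bigr => i _; rewrite sum_kdelta. Qed.

Lemma kdelta_idem i j : (1 - kdelta i j) ^+ 2 = 1 - kdelta i j.
Proof. by rewrite /kdelta; case: (i == j); rewrite ?subrr ?subr0 ?expr0n ?expr1n. Qed.

Lemma sum_ltn_sym (F : 'I_d -> 'I_d -> R) : (forall i j, F i j = F j i) ->
  (\sum_(i : 'I_d) \sum_(j : 'I_d | (i < j)%N) F i j) *+ 2 = \sum_i \sum_j F i j - \sum_i F i i.
Proof.
move=> Fsym.
have split3 : \sum_i \sum_j F i j = \sum_(i : 'I_d) \sum_(j : 'I_d | (i < j)%N) F i j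
   + \sum_(i : 'I_d) \sum_(j : 'I_d | (j < i)%N) F i j + \sum_i F i i.
  rewrite -!big_split /=; apply: eq_bigr => i _.
  rewrite (bigID (fun j : 'I_d => (i < j)%N)) /= -addrA; congr (_ + _).
  rewrite (bigID (fun j : 'I_d => (j < i)%N)) /=; congr (_ + _).
    by apply: eq_bigl => j; case: ltngtP.
  by rewrite (big_pred1 i) // => j /=; rewrite -!leqNgt -eqn_leq.
have lower_upper : \sum_(i : 'I_d) \sum_(j : 'I_d | (j < i)%N) F i j
    = \sum_(i : 'I_d) \sum_(j : 'I_d | (i < j)%N) F i j.
  under eq_bigr do rewrite big_mkcond.
  rewrite exchange_big /=; apply: eq_bigr => i _; rewrite big_mkcond.
  by rewrite [RHS]big_mkcond; apply: eq_bigr => j _; rewrite Fsym.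
by rewrite split3 lower_upper mulr2n addrK.
Qed.

Definition ketr x i j : R := kdelta x.1 i * kdelta x.2 j.

Definition id_op x y := kdelta x.1 y.1 * kdelta x.2 y.2.
Definition diag_op x y := kdelta x.1 y.1 * kdelta x.2 y.2 * kdelta x.1 x.2.
Definition phi_op x y := kdelta x.1 x.2 * kdelta y.1 y.2.
Definition swap_op x y := kdelta x.1 y.2 * kdelta x.2 y.1.

Lemma sum_ketr_id x y : \sum_i \sum_j ketr x i j * ketr y i j = id_op x y.
Proof.
rewrite (eq_bigr (fun i => kdelta x.1 i * (kdelta y.1 i * \sum_j kdelta x.2 j * kdelta y.2 j))).
  by rewrite sum_kdelta sum_kdelta /id_op; kdelta_cases; ring.
by move=> i _; rewrite !mulr_sumr; apply: eq_bigr => j _; rewrite /ketr; ring.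
Qed.

Lemma sum_ketr_swap x y : \sum_i \sum_j ketr x i j * ketr y j i = swap_op x y.
Proof.
rewrite (eq_bigr (fun i => kdelta x.1 i * (kdelta y.2 i * \sum_j kdelta x.2 j * kdelta y.1 j))).
  by rewrite sum_kdelta sum_kdelta /swap_op; kdelta_cases; ring.
by move=> i _; rewrite !mulr_sumr; apply: eq_bigr => j _; rewrite /ketr; ring.
Qed.

Lemma sum_ketr_phi x y : \sum_i \sum_j ketr x i i * ketr y j j = phi_op x y.
Proof.
rewrite (eq_bigr (fun i => kdelta x.1 i * (kdelta x.2 i * \sum_j kdelta y.1 j * kdelta y.2 j))).
  by rewrite sum_kdelta sum_kdelta /phi_op; kdelta_cases; ring.
by move=> i _; rewrite !mulr_sumr; apply: eq_bigr => j _; rewrite /ketr; ring.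
Qed.

Lemma sum_ketr_diag x y : \sum_i ketr x i i * ketr y i i = diag_op x y.
Proof.
rewrite (eq_bigr (fun i => kdelta x.1 i * (kdelta x.2 i * kdelta y.1 i * kdelta y.2 i))).
  by rewrite sum_kdelta /diag_op; kdelta_cases; ring.
by move=> i _; rewrite /ketr; ring.
Qed.

Lemma sum_ketr_diag_const x y :
  \sum_i \sum_(j < d) ketr x i i * ketr y i i = d%:R * diag_op x y.
Proof.
by rewrite -sum_ketr_diag mulr_sumr; apply: eq_bigr => i _; rewrite sumr_const_ord.
Qed.

Lemma sum_ketr_id_flip x y : \sum_i \sum_j ketr x j i * ketr y j i = id_op x y.
Proof. by rewrite exchange_big /= sum_ketr_id. Qed.

Lemma sum_ketr_swap_flip x y : \sum_i \sum_j ketr x j i * ketr y i j = swap_op x y.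
Proof. by rewrite exchange_big /= sum_ketr_swap. Qed.

Lemma sum_ketr_phi_flip x y : \sum_i \sum_j ketr x j j * ketr y i i = phi_op x y.
Proof. by rewrite exchange_big /= sum_ketr_phi. Qed.

Lemma sum_ketr_diag_const_flip x y :
  \sum_(i < d) \sum_j ketr x j j * ketr y j j = d%:R * diag_op x y.
Proof. by rewrite exchange_big /= sum_ketr_diag_const. Qed.

Definition term := ('I_6 * 'I_d * 'I_d)%type.
Definition family (r : term) : nat := r.1.1.

(* The vector v_(k,i,j) of family k:
   0: |i>|j> (i <> j),  1: (|i>+|j>)(|i>-|j>),  2: (|i>-|j>)(|i>+|j>),
   3: |ii> - |jj>,  4: |ij> + |ji> (i <> j),  5: sum_l |ll> (i = j, else 0).
   Families 0-2 consist of product vectors, with factors [pvecA] and [pvecB]. *)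
Definition pvecA (r : term) (l : 'I_d) : R := let: (k, i, j) := r in
  match val k with 0 => kdelta l i | 1 => kdelta l i + kdelta l j
  | 2 => kdelta l i - kdelta l j | _ => 0 end.
Definition pvecB (r : term) (m : 'I_d) : R := let: (k, i, j) := r in
  match val k with 0 => (1 - kdelta i j) * kdelta m j | 1 => kdelta m i - kdelta m j
  | 2 => kdelta m i + kdelta m j | _ => 0 end.
Definition tvec (r : term) x : R := let: (k, i, j) := r in
  match val k with 0 | 1 | 2 => pvecA r x.1 * pvecB r x.2
  | 3 => ketr x i i - ketr x j j | 4 => (1 - kdelta i j) * (ketr x i j + ketr x j i)
  | _ => kdelta i j * kdelta x.1 x.2 end.

Lemma tvec_product (r : term) x : (family r < 3)%N -> tvec r x = pvecA r x.1 * pvecB r x.2.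
Proof. by case: r => [[[[|[|[|k]]] Hk] i] j]. Qed.

Lemma sum_term (F : term -> R) :
  \sum_r F r = \sum_(k < 6) \sum_i \sum_j F (k, i, j).
Proof. by rewrite pair_big /= pair_big /=; apply: eq_bigr => -[[k i] j]. Qed.

Lemma sum_ltn_outer x y (s : R) : s ^+ 2 = 1 ->
  \sum_(i : 'I_d) \sum_(j : 'I_d | (i < j)%N)
      (ketr x i j + s * ketr x j i) * (ketr y i j + s * ketr y j i) / 2
  = (id_op x y + s * swap_op x y - (1 + s) * diag_op x y) / 2.
Proof.
move=> s2.
pose F i j := (ketr x i j + s * ketr x j i) * (ketr y i j + s * ketr y j i) / 2.
have Fsym : forall i j, F i j = F j i.
  move=> i j; apply/eqP; rewrite -subr_eq0; apply/eqP.
  rewrite (_ : _ - _ = (1 - s ^+ 2) * (ketr x i j * ketr y i j - ketr x j i * ketr y j i) / 2).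
    by rewrite s2 subrr !mul0r.
  by rewrite /F; ring.
apply: (@mulIf _ 2); first by rewrite pnatr_eq0.
rewrite [LHS]mulr_natr; have := sum_ltn_sym Fsym; rewrite /F => ->.
rewrite (eq_bigr (fun i => \sum_j (1 / 2 * (ketr x i j * ketr y i j)
   + s / 2 * (ketr x i j * ketr y j i) + s / 2 * (ketr x j i * ketr y i j)
   + s ^+ 2 / 2 * (ketr x j i * ketr y j i)))); last first.
  by move=> i _; apply: eq_bigr => j _; rewrite mulrDl; ring.
rewrite !sumr2D !sumr2Z sum_ketr_id sum_ketr_swap sum_ketr_swap_flip sum_ketr_id_flip.
rewrite (eq_bigr (fun i => (1 + s) ^+ 2 / 2 * (ketr x i i * ketr y i i))); last first.
  by move=> i _; ring.
rewrite -mulr_sumr sum_ketr_diag s2.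
have -> : (1 + s) ^+ 2 = 2 * (1 + s) by rewrite sqrrD s2 expr1n; ring.
by field.
Qed.

Section FamilyOuterProducts.
Variables x y : pidx d.

Lemma outer_family0 :
  \sum_i \sum_j kdelta x.1 i * ((1 - kdelta i j) * kdelta x.2 j) *
    (kdelta y.1 i * ((1 - kdelta i j) * kdelta y.2 j)) = id_op x y - diag_op x y.
Proof.
rewrite (eq_bigr (fun i => \sum_j
   (ketr x i j * ketr y i j + (-1) * (kdelta i j * (ketr x i i * ketr y i i))))).
  by rewrite sumr2D sumr2Z sum_ketr_id sum_kdelta_diag sum_ketr_diag; ring.
by move=> i _; apply: eq_bigr => j _; rewrite /ketr; kdelta_split i j; ring.
Qed.

Lemma outer_family12 :
  \sum_i \sum_j (kdelta x.1 i + kdelta x.1 j) * (kdelta x.2 i - kdelta x.2 j) *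
     ((kdelta y.1 i + kdelta y.1 j) * (kdelta y.2 i - kdelta y.2 j)) +
  \sum_i \sum_j (kdelta x.1 i - kdelta x.1 j) * (kdelta x.2 i + kdelta x.2 j) *
     ((kdelta y.1 i - kdelta y.1 j) * (kdelta y.2 i + kdelta y.2 j))
  = 4 * d%:R * diag_op x y - 4 * phi_op x y + 4 * id_op x y - 4 * swap_op x y.
Proof.
rewrite -sumr2D (eq_bigr (fun i => \sum_j (
   2 * (ketr x i i * ketr y i i) + (-2) * (ketr x i i * ketr y j j)
 + (-2) * (ketr x j j * ketr y i i) + 2 * (ketr x j j * ketr y j j)
 + 2 * (ketr x j i * ketr y j i) + (-2) * (ketr x j i * ketr y i j)
 + (-2) * (ketr x i j * ketr y j i) + 2 * (ketr x i j * ketr y i j)))); last first.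
  by move=> i _; apply: eq_bigr => j _; rewrite /ketr; ring.
rewrite !sumr2D !sumr2Z sum_ketr_diag_const sum_ketr_phi sum_ketr_phi_flip.
rewrite sum_ketr_diag_const_flip sum_ketr_id_flip sum_ketr_swap_flip sum_ketr_swap.
rewrite sum_ketr_id; ring.
Qed.

Lemma outer_family3 :
  \sum_i \sum_j (ketr x i i - ketr x j j) * (ketr y i i - ketr y j j)
  = 2 * d%:R * diag_op x y - 2 * phi_op x y.
Proof.
rewrite (eq_bigr (fun i => \sum_j (ketr x i i * ketr y i i
   + (-1) * (ketr x i i * ketr y j j) + (-1) * (ketr x j j * ketr y i i)
   + ketr x j j * ketr y j j))); last by move=> i _; apply: eq_bigr => j _; ring.
rewrite !sumr2D !sumr2Z sum_ketr_diag_const sum_ketr_phi sum_ketr_phi_flip.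
rewrite sum_ketr_diag_const_flip; ring.
Qed.

Lemma outer_family4 :
  \sum_i \sum_j (1 - kdelta i j) * (ketr x i j + ketr x j i) *
     ((1 - kdelta i j) * (ketr y i j + ketr y j i))
  = 2 * id_op x y + 2 * swap_op x y - 4 * diag_op x y.
Proof.
rewrite (eq_bigr (fun i => \sum_j (ketr x i j * ketr y i j + ketr x i j * ketr y j i
   + ketr x j i * ketr y i j + ketr x j i * ketr y j i
   + (-4) * (kdelta i j * (ketr x i i * ketr y i i))))); last first.
  by move=> i _; apply: eq_bigr => j _; rewrite /ketr; kdelta_split i j; ring.
rewrite !sumr2D !sumr2Z sum_ketr_id sum_ketr_swap sum_ketr_swap_flip sum_ketr_id_flip.
rewrite sum_kdelta_diag sum_ketr_diag; ring.
Qed.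

Lemma outer_family5 :
  \sum_i \sum_j kdelta i j * kdelta x.1 x.2 * (kdelta i j * kdelta y.1 y.2)
  = d%:R * phi_op x y.
Proof.
rewrite (eq_bigr (fun i => \sum_j kdelta i j * phi_op x y)).
  by rewrite sum_kdelta_diag sumr_const_ord.
by move=> i _; apply: eq_bigr => j _; rewrite /phi_op; kdelta_split i j; ring.
Qed.

End FamilyOuterProducts.

Section Decomposition.
Variables (a b c eta : R).

Definition wid := (b + c) / 2.
Definition wphi := (c - b) / 2.

Definition rho_op x y := a * diag_op x y + b * (id_op x y - swap_op x y) / 2
  + c * (id_op x y + swap_op x y - 2 * diag_op x y) / 2.

Definition wop x y := wid * id_op x y + (a - c) * diag_op x y + wphi * phi_op x y.

(* [wop_decomp] holds for every [eta]: it is weight moved onto the product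
   families 1 and 2, which keeps them bounded away from 0 as eps -> 0. *)
Definition tcoef (r : term) : R :=
  match val r.1.1 with
  | 0 => wid - 8 * eta | 1 | 2 => eta
  | 3 => (a - c + wid - 4 * d%:R * eta) / (2 * d%:R) | 4 => 2 * eta
  | _ => (wphi + (a - c + wid) / d%:R) / d%:R end.

Lemma wop_decomp x y : (0 < d)%N ->
  \sum_r tcoef r * (tvec r x * tvec r y) = wop x y.
Proof.
move=> d_gt0.
rewrite sum_term !big_ord_recl big_ord0 addr0 /= /tcoef /tvec /pvecA /pvecB /=.
rewrite !sumr2Z outer_family0 outer_family3 outer_family4 outer_family5.
set s1 := \sum_i \sum_j (kdelta x.1 i + _) * _ * _.
set s2 := \sum_i \sum_j (kdelta x.1 i - _) * _ * _.
have -> : s2 = 4 * d%:R * diag_op x y - 4 * phi_op x y + 4 * id_op x y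
               - 4 * swap_op x y - s1.
  by rewrite -(outer_family12 x y) -/s1 -/s2; ring.
have d_neq0 : d%:R != 0 :> R by rewrite pnatr_eq0 -lt0n.
by rewrite /wop /wid /wphi; field; rewrite d_neq0.
Qed.

Lemma rho_op_ptrans x y : rho_op (x.1, y.2) (y.1, x.2) = wop x y.
Proof.
rewrite /rho_op /wop /wid /wphi /id_op /diag_op /phi_op /swap_op.
by kdelta_cases; field.
Qed.

End Decomposition.
End BasisAlgebra.

Arguments kdelta {R d}.
Arguments ketr {R d}.
Arguments id_op {R d}.
Arguments diag_op {R d}.
Arguments phi_op {R d}.
Arguments swap_op {R d}.
Arguments rho_op {R d}.
Arguments pvecA {R d}.
Arguments pvecB {R d}.
Arguments tvec {R d}.
Arguments family {d}.
Arguments wid {R}.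
Arguments wphi {R}.
Arguments wop {R d}.
Arguments tcoef {R d}.

Section RealForm.
Variables (R : rcfType) (d : nat).
Local Notation C := R[i].
Local Notation realC := (real_complex R).
Implicit Types (i j : 'I_d) (x y : pidx d).

Lemma conj_realC (x : R) : (realC x)^* = realC x.
Proof. by apply/eqP; rewrite eq_complex /= oppr0 !eqxx. Qed.

Lemma ket_ketr i j x : ket R i j x = realC (ketr x i j).
Proof.
case: x => x1 x2; rewrite /ket /ketr /kdelta /= xpair_eqE.
by case: (x1 == i); case: (x2 == j); rewrite /= ?mul0r ?mulr0 ?mulr1 ?rmorph_nat.
Qed.

Lemma mul_conj_div_sqrt2 (a b : R) :
  (realC a / sqrtC 2) * (realC b / sqrtC 2)^* = realC (a * b / 2).
Proof.
have sqrt2_ge0 : 0 <= sqrtC (2 : C) by rewrite sqrtC_ge0 ler0n.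
rewrite rmorphM /= fmorphV /= conj_realC (geC0_conj sqrt2_ge0).
rewrite !rmorphM fmorphV /= rmorph_nat.
by rewrite mulrACA -invfM -expr2 sqrtCK.
Qed.

Definition wdiag (c eps : R) : R := 1 / (2 * d%:R) - (d%:R - 1) / 2 * (c + eps).
Definition wsing (eps : R) : R := 1 / (d%:R * (d%:R - 1)) + eps.

Lemma rho_real c eps x y :
  rho d c eps x y = realC (rho_op (wdiag c eps) (wsing eps) c x y).
Proof.
have psi_outer (s : R) : s ^+ 2 = 1 ->
    \sum_(i : 'I_d) \sum_(j : 'I_d | (i < j)%N)
      (ket R i j x + realC s * ket R j i x) / sqrtC 2
      * ((ket R i j y + realC s * ket R j i y) / sqrtC 2)^*
    = realC ((id_op x y + s * swap_op x y - (1 + s) * diag_op x y) / 2).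
  move=> s2; rewrite -sum_ltn_outer // rmorph_sum; apply: eq_bigr => i _.
  rewrite rmorph_sum; apply: eq_bigr => j _.
  by rewrite !ket_ketr -!rmorphM -!rmorphD mul_conj_div_sqrt2.
have psiME i j z : psiM R i j z = (ket R i j z + realC (-1) * ket R j i z) / sqrtC 2.
  by rewrite /psiM rmorphN1 mulN1r.
have psiPE i j z : psiP R i j z = (ket R i j z + realC 1 * ket R j i z) / sqrtC 2.
  by rewrite /psiP rmorph1 mul1r.
have diag_outer : \sum_i ket R i i x * (ket R i i y)^* = realC (diag_op x y).
  rewrite -sum_ketr_diag rmorph_sum; apply: eq_bigr => i _.
  by rewrite !ket_ketr conj_realC -rmorphM.
rewrite /rho /proj diag_outer.
under eq_bigr do under eq_bigr do rewrite !psiME.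
under [X in _ + rC _ * X]eq_bigr do under eq_bigr do rewrite !psiPE.
have sqrN1 : (-1 : R) ^+ 2 = 1 by rewrite sqrrN expr1n.
rewrite (psi_outer _ sqrN1) (psi_outer _ (expr1n _ 2)).
have realC_comb (a b e A B E : R) :
  rC a * realC A + rC b * realC B + rC e * realC E = realC (a * A + b * B + e * E).
  by rewrite !rmorphD !rmorphM.
by rewrite realC_comb; congr (realC _); rewrite /rho_op /wdiag /wsing; ring.
Qed.

Lemma ptrans_rho c eps x y :
  ptrans (rho d c eps) x y = realC (wop (wdiag c eps) (wsing eps) c x y).
Proof. by rewrite /ptrans rho_real rho_op_ptrans. Qed.

Definition sqmod (z : C) : R := complex.Re z ^+ 2 + complex.Im z ^+ 2.

Lemma mul_conj_sqmod (z : C) : z^* * z = realC (sqmod z).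
Proof.
by case: z => a b; apply/eqP; rewrite eq_complex /sqmod /=; apply/andP; split; apply/eqP; ring.
Qed.

Lemma sqmod_ge0 (z : C) : 0 <= sqmod z.
Proof. by rewrite addr_ge0 ?sqr_ge0. Qed.

Section TensorExpansion.
Variable n : nat.
Local Notation T := (tidx d n).

Definition tvec_pow (t : {ffun 'I_n -> term d}) (a b : T) : R :=
  \prod_k tvec (t k) (a k, b k).

Definition overlap (t : {ffun 'I_n -> term d}) (psi : T -> T -> C) : C :=
  \sum_a \sum_b realC (tvec_pow t a b) * psi a b.

Lemma expval_decomp (X : op2 R d) (w : term d -> R) (psi : T -> T -> C) :
  (forall x y, X x y = realC (\sum_r w r * (tvec r x * tvec r y))) ->
  expval X psi =
    realC (\sum_(t : {ffun 'I_n -> term d}) (\prod_k w (t k)) * sqmod (overlap t psi)).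
Proof.
move=> XE.
have tensor_powE a b a' b' : tensor_pow X a b a' b' = \sum_(t : {ffun 'I_n -> term d})
    realC (\prod_k w (t k)) * realC (tvec_pow t a b) * realC (tvec_pow t a' b').
  rewrite /tensor_pow; under eq_bigr do rewrite XE.
  rewrite -rmorph_prod bigA_distr_bigA /= rmorph_sum; apply: eq_bigr => t _.
  rewrite -!rmorphM /tvec_pow -!big_split /=; congr (realC _).
  by apply: eq_bigr => k _; rewrite mulrA.
rewrite /expval rmorph_sum.
under eq_bigr do under eq_bigr do under eq_bigr do under eq_bigr do
  rewrite tensor_powE mulr_sumr mulr_suml.
under eq_bigr do under eq_bigr do under eq_bigr do rewrite exchange_big.
under eq_bigr do under eq_bigr do rewrite exchange_big.
under eq_bigr do rewrite exchange_big.
rewrite exchange_big; apply: eq_bigr => t _.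
rewrite [RHS]rmorphM /= -mul_conj_sqmod /overlap rmorph_sum /= mulr_suml mulr_sumr.
apply: eq_bigr => a _; rewrite rmorph_sum /= mulr_suml mulr_sumr.
apply: eq_bigr => b _; rewrite mulr_sumr mulr_sumr; apply: eq_bigr => a' _.
rewrite mulr_sumr mulr_sumr; apply: eq_bigr => b' _.
by rewrite rmorphM /= conj_realC; ring.
Qed.

End TensorExpansion.
End RealForm.

Arguments wdiag {R} d.
Arguments wsing {R} d.
Arguments sqmod {R}.
Arguments tvec_pow {R d n}.
Arguments overlap {R d n}.

Section SquaredModulus.
Variable R : rcfType.
Local Notation C := R[i].
Local Notation realC := (real_complex R).
Local Notation Re := (@complex.Re R).
Local Notation Im := (@complex.Im R).

Lemma Re_sum (I : finType) (F : I -> C) : Re (\sum_i F i) = \sum_i Re (F i).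
Proof. by apply: (big_morph Re) => // -[? ?] [? ?]. Qed.

Lemma Im_sum (I : finType) (F : I -> C) : Im (\sum_i F i) = \sum_i Im (F i).
Proof. by apply: (big_morph Im) => // -[? ?] [? ?]. Qed.

Lemma sqmod_parallelogram (x y : C) :
  sqmod (x + y) + sqmod (x - y) = 2 * sqmod x + 2 * sqmod y.
Proof. by case: x => a b; case: y => c e; rewrite /sqmod /=; ring. Qed.

Lemma sqmodD_le (x y : C) : sqmod (x + y) <= 2 * sqmod x + 2 * sqmod y.
Proof. by rewrite -sqmod_parallelogram lerDl sqmod_ge0. Qed.

Lemma sqmod_realCM (r : R) (z : C) : sqmod (realC r * z) = r ^+ 2 * sqmod z.
Proof. by case: z => a b; rewrite /sqmod /=; ring. Qed.

Lemma sqmod_realC (r : R) : sqmod (realC r) = r ^+ 2.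
Proof. by rewrite /sqmod /= expr0n addr0. Qed.

Lemma sqmod_eq0 (z : C) : sqmod z = 0 -> z = 0.
Proof.
case: z => a b /eqP; rewrite /sqmod /= paddr_eq0 ?sqr_ge0 // !sqrf_eq0.
by case/andP => /eqP -> /eqP ->.
Qed.

(* Twice the gap between the two sides is |x1 y2^* - x2 y1^*|^2. *)
Lemma cauchy_schwarz_cross (x1 y1 x2 y2 : C) :
  Re (x1 * y1) * Re (x2 * y2) + Im (x1 * y1) * Im (x2 * y2)
    <= (sqmod x1 * sqmod y2 + sqmod x2 * sqmod y1) / 2.
Proof.
case: x1 => p q; case: y1 => r s; case: x2 => p' q'; case: y2 => r' s'.
rewrite /sqmod /=.
have : 0 <= (p * r' + q * s' - p' * r - q' * s) ^+ 2 + (p * s' - q * r' - p' * s + q' * r) ^+ 2.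
  by rewrite addr_ge0 ?sqr_ge0.
have -> : (p * r' + q * s' - p' * r - q' * s) ^+ 2 + (p * s' - q * r' - p' * s + q' * r) ^+ 2
   = (p ^+ 2 + q ^+ 2) * (r' ^+ 2 + s' ^+ 2) + (p' ^+ 2 + q' ^+ 2) * (r ^+ 2 + s ^+ 2)
   - 2 * ((p * r - q * s) * (p' * r' - q' * s') + (p * s + q * r) * (p' * s' + q' * r')).
  by ring.
lra.
Qed.

Lemma cauchy_schwarz (I : finType) (x y : I -> C) :
  sqmod (\sum_i x i * y i) <= (\sum_i sqmod (x i)) * (\sum_i sqmod (y i)).
Proof.
rewrite /sqmod Re_sum Im_sum !sqr_sumr -big_split /= big_distrlr.
rewrite -(@sumr2_sym_avg _ _ (fun i j => sqmod (x i) * sqmod (y j))).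
apply: ler_sum => i _; rewrite -big_split /=; apply: ler_sum => j _.
exact: cauchy_schwarz_cross.
Qed.

Lemma sum_sqmod_diff (n : nat) (x : 'I_n -> C) :
  \sum_i \sum_j sqmod (x i - x j) = 2 * n%:R * \sum_i sqmod (x i) - 2 * sqmod (\sum_i x i).
Proof.
rewrite (eq_bigr (fun i => \sum_j ((Re (x i) - Re (x j)) ^+ 2 + (Im (x i) - Im (x j)) ^+ 2))).
  rewrite sumr2D !sum_sqr_diff /sqmod Re_sum Im_sum big_split /=; ring.
by move=> i _; apply: eq_bigr => j _; case: (x i) => [? ?]; case: (x j).
Qed.

End SquaredModulus.

Section FfunCons.
Variable X : finType.

Definition fcons m (x : X) (a : {ffun 'I_m -> X}) : {ffun 'I_m.+1 -> X} :=
  [ffun k => if unlift ord0 k is Some k' then a k' else x].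

Definition ftail m (a : {ffun 'I_m.+1 -> X}) : {ffun 'I_m -> X} :=
  [ffun k => a (lift ord0 k)].

Lemma fcons0 m x (a : {ffun 'I_m -> X}) : fcons x a ord0 = x.
Proof. by rewrite ffunE unlift_none. Qed.

Lemma fconsS m x (a : {ffun 'I_m -> X}) k : fcons x a (lift ord0 k) = a k.
Proof. by rewrite ffunE liftK. Qed.

Lemma fconsK m (a : {ffun 'I_m.+1 -> X}) : fcons (a ord0) (ftail a) = a.
Proof. by apply/ffunP => k; rewrite ffunE; case: unliftP => [j ->|->] //; rewrite ffunE. Qed.

Lemma ftail_fcons m x (a : {ffun 'I_m -> X}) : ftail (fcons x a) = a.
Proof. by apply/ffunP => k; rewrite ffunE fconsS. Qed.

Lemma sum_ffunS (V : nmodType) m (F : {ffun 'I_m.+1 -> X} -> V) :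
  \sum_a F a = \sum_x \sum_(a : {ffun 'I_m -> X}) F (fcons x a).
Proof.
rewrite pair_big /= (reindex (fun p : X * {ffun 'I_m -> X} => fcons p.1 p.2)) //=.
exists (fun a : {ffun 'I_m.+1 -> X} => (a ord0, ftail a)) => [[x a] _|a _] /=.
  by rewrite fcons0 ftail_fcons.
by rewrite fconsK.
Qed.

Lemma sum_ffun0 (V : nmodType) (F : {ffun 'I_0 -> X} -> V) (a0 : {ffun 'I_0 -> X}) :
  \sum_a F a = F a0.
Proof.
rewrite (bigD1 a0) //= big1 ?addr0 // => a.
by rewrite (_ : a = a0) ?eqxx //; apply/ffunP => -[].
Qed.

End FfunCons.

(** * Contracting one copy, and Schmidt rank two *)

Section Contraction.
Variables (R : rcfType) (d : nat).
Local Notation C := R[i].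
Local Notation realC := (real_complex R).
Local Notation T m := (tidx d m).
Local Notation term := (term d).

Definition contract m (r : term) (psi : T m.+1 -> T m.+1 -> C) : T m -> T m -> C :=
  fun a b => \sum_l \sum_l' realC (tvec r (l, l')) * psi (fcons l a) (fcons l' b).

Lemma tvec_pow_fcons m r (t : {ffun 'I_m -> term}) l l' (a b : T m) :
  tvec_pow (fcons r t) (fcons l a) (fcons l' b) = tvec r (l, l') * tvec_pow t a b :> R.
Proof.
rewrite /tvec_pow big_ord_recl !fcons0; congr (_ * _).
by apply: eq_bigr => k _; rewrite !fconsS.
Qed.

Lemma overlap_fcons m r (t : {ffun 'I_m -> term}) (psi : T m.+1 -> T m.+1 -> C) :
  overlap (fcons r t) psi = overlap t (contract r psi).
Proof.
rewrite /overlap sum_ffunS.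
under eq_bigr do under eq_bigr do rewrite sum_ffunS.
under eq_bigr do under eq_bigr do under eq_bigr do under eq_bigr do
  rewrite tvec_pow_fcons rmorphM.
rewrite exchange_big /=; apply: eq_bigr => a _.
under eq_bigr do rewrite exchange_big /=.
rewrite exchange_big /=; apply: eq_bigr => b _.
rewrite /contract mulr_sumr; apply: eq_bigr => l _; rewrite mulr_sumr.
by apply: eq_bigr => l' _; ring.
Qed.

Definition all_product m (t : {ffun 'I_m -> term}) : bool :=
  [forall k, (family (t k) < 3)%N].

Lemma all_product_fcons m r (t : {ffun 'I_m -> term}) :
  all_product (fcons r t) = (family r < 3)%N && all_product t.
Proof.
apply/forallP/andP => [fcons_prod|[r_prod /forallP t_prod] k].
  split; first by have := fcons_prod ord0; rewrite fcons0.
  by apply/forallP => k; have := fcons_prod (lift ord0 k); rewrite fconsS.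
by case: (unliftP ord0 k) => [j ->|->]; rewrite ?fconsS ?fcons0.
Qed.

Lemma sum_all_product m (F : {ffun 'I_m.+1 -> term} -> R) :
  \sum_(t | all_product t) F t =
  \sum_(r | (family r < 3)%N) \sum_(t : {ffun 'I_m -> term} | all_product t) F (fcons r t).
Proof.
rewrite big_mkcond sum_ffunS [RHS]big_mkcond; apply: eq_bigr => r _.
under eq_bigr do rewrite all_product_fcons.
by case: (family r < 3)%N => /=; [rewrite [RHS]big_mkcond | rewrite big1_eq].
Qed.

Definition rank_le2 m (psi : T m -> T m -> C) :=
  exists u1 v1 u2 v2 : T m -> C, forall a b, psi a b = u1 a * v1 b + u2 a * v2 b.

Lemma contract_product m r (psi : T m.+1 -> T m.+1 -> C) a b : (family r < 3)%N ->
  contract r psi a b =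
  \sum_l realC (pvecA r l) * \sum_l' realC (pvecB r l') * psi (fcons l a) (fcons l' b).
Proof.
move=> r_prod; apply: eq_bigr => l _; rewrite mulr_sumr; apply: eq_bigr => l' _.
by rewrite tvec_product // rmorphM /=; ring.
Qed.

Lemma rank_le2_contract m r (psi : T m.+1 -> T m.+1 -> C) :
  (family r < 3)%N -> rank_le2 psi -> rank_le2 (contract r psi).
Proof.
move=> r_prod [u1 [v1 [u2 [v2 psiE]]]].
exists (fun a => \sum_l realC (pvecA r l) * u1 (fcons l a)),
       (fun b => \sum_l' realC (pvecB r l') * v1 (fcons l' b)),
       (fun a => \sum_l realC (pvecA r l) * u2 (fcons l a)),
       (fun b => \sum_l' realC (pvecB r l') * v2 (fcons l' b)).
move=> a b; rewrite contract_product // !mulr_suml -big_split /=.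
apply: eq_bigr => l _; rewrite !mulr_sumr -big_split /=; apply: eq_bigr => l' _.
by rewrite psiE; ring.
Qed.

Definition sqnorm m (psi : T m -> T m -> C) := \sum_a \sum_b sqmod (psi a b).
Definition sqnormv m (u : T m -> C) := \sum_a sqmod (u a).

Lemma sqnorm_ge0 m (psi : T m -> T m -> C) : 0 <= sqnorm psi.
Proof. by do 2!apply: sumr_ge0 => ? _; apply: sqmod_ge0. Qed.

Lemma sum_conj_sqmod (I : finType) (v : I -> C) :
  \sum_b v b * (v b)^* = realC (\sum_b sqmod (v b)).
Proof. by rewrite rmorph_sum /=; apply: eq_bigr => b _; rewrite -mul_conj_sqmod mulrC. Qed.

(* One Gram-Schmidt step on the B-parts. *)
Lemma rank_le2_orth m (psi : T m -> T m -> C) : rank_le2 psi ->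
  exists u1 v1 u2 v2 : T m -> C,
    (forall a b, psi a b = u1 a * v1 b + u2 a * v2 b) /\ \sum_b v1 b * (v2 b)^* = 0.
Proof.
case=> u1 [v1 [u2 [v2 psiE]]].
set S11 := \sum_b v1 b * (v1 b)^*.
set S21 := \sum_b v2 b * (v1 b)^*.
pose al := S21 / S11.
exists (fun a => u1 a + al * u2 a), v1, u2, (fun b => v2 b - al * v1 b); split.
  by move=> a b; rewrite psiE; ring.
have S11_real : S11^* = S11.
  by rewrite /S11 rmorph_sum; apply: eq_bigr => b _; rewrite rmorphM /= conjCK mulrC.
have -> : \sum_b v1 b * (v2 b - al * v1 b)^* = S21^* - al^* * S11.
  rewrite /S21 rmorph_sum /S11 mulr_sumr -sumrB; apply: eq_bigr => b _.
  by rewrite rmorphB /= !rmorphM /= conjCK; ring.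
have [S11_0|S11_neq0] := eqVneq S11 0; last first.
  by rewrite /al rmorphM /= fmorphV /= S11_real divfK // subrr.
have v1_0 b : v1 b = 0.
  have sum0 : \sum_b sqmod (v1 b) = 0.
    by apply: complexI; rewrite -sum_conj_sqmod -/S11 S11_0.
  by apply: sqmod_eq0; exact: (psumr_eq0P (fun i _ => sqmod_ge0 (v1 i)) sum0).
rewrite S11_0 mulr0 subr0 /S21 rmorph_sum big1 // => b _.
by rewrite v1_0 /= !(rmorph0, mulr0).
Qed.

Lemma sqnorm_orth m (u1 v1 u2 v2 : T m -> C) : \sum_b v1 b * (v2 b)^* = 0 ->
  sqnorm (fun a b => u1 a * v1 b + u2 a * v2 b)
  = sqnormv u1 * sqnormv v1 + sqnormv u2 * sqnormv v2.
Proof.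
move=> orth.
have orth1 : \sum_b (v1 b)^* * v2 b = 0.
  transitivity ((\sum_b v1 b * (v2 b)^*)^*); last by rewrite orth rmorph0.
  by rewrite rmorph_sum /=; apply: eq_bigr => b _; rewrite rmorphM /= conjCK mulrC.
have orth2 : \sum_b (v2 b)^* * v1 b = 0.
  by rewrite -[RHS]orth; apply: eq_bigr => b _; rewrite mulrC.
apply: complexI; rewrite rmorphD !rmorphM /sqnorm /sqnormv !rmorph_sum /=.
under eq_bigr do rewrite rmorph_sum /=.
under eq_bigr do under eq_bigr do rewrite -mul_conj_sqmod.
under [X in _ = X * _ + _]eq_bigr do rewrite -mul_conj_sqmod.
under [X in _ = _ * X + _]eq_bigr do rewrite -mul_conj_sqmod.
under [X in _ = _ + X * _]eq_bigr do rewrite -mul_conj_sqmod.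
under [X in _ = _ + _ * X]eq_bigr do rewrite -mul_conj_sqmod.
rewrite (eq_bigr (fun a => \sum_b (((u1 a)^* * u1 a) * ((v1 b)^* * v1 b)
   + ((u2 a)^* * u2 a) * ((v2 b)^* * v2 b) + ((u1 a)^* * u2 a) * ((v1 b)^* * v2 b)
   + ((u2 a)^* * u1 a) * ((v2 b)^* * v1 b)))); last first.
  by move=> a _; apply: eq_bigr => b _; rewrite rmorphD !rmorphM /=; ring.
by rewrite !sumr2D -!big_distrlr /= orth1 orth2 !mulr0 !addr0.
Qed.

Lemma sqnormv_split m (u : T m.+1 -> C) :
  sqnormv u = \sum_a \sum_i sqmod (u (fcons i a)).
Proof. by rewrite /sqnormv sum_ffunS exchange_big. Qed.

(* With orthogonal B-parts, Cauchy-Schwarz on each of the two Schmidt terms; the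
   factor 2 is the Schmidt rank. *)
Lemma sqnorm_phi_contract_le m (psi : T m.+1 -> T m.+1 -> C) : rank_le2 psi ->
  sqnorm (fun a b => \sum_i psi (fcons i a) (fcons i b)) <= 2 * sqnorm psi.
Proof.
move/rank_le2_orth => [u1 [v1 [u2 [v2 [psiE orth]]]]].
have -> : sqnorm psi = sqnormv u1 * sqnormv v1 + sqnormv u2 * sqnormv v2.
  rewrite -(sqnorm_orth u1 u2 orth) /sqnorm.
  by apply: eq_bigr => a _; apply: eq_bigr => b _; rewrite psiE.
rewrite !sqnormv_split !big_distrlr mulrDr !mulr_sumr -big_split /=.
apply: ler_sum => a _; rewrite !mulr_sumr -big_split /=; apply: ler_sum => b _.
under eq_bigr do rewrite psiE.
rewrite big_split /=; apply: le_trans (sqmodD_le _ _) _.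
by apply: lerD; apply: ler_wpM2l => //; apply: cauchy_schwarz.
Qed.

Lemma sum_kdelta_realC (i : 'I_d) (H : 'I_d -> C) : \sum_l realC (kdelta l i) * H l = H i.
Proof.
rewrite (bigD1 i) //= /kdelta eqxx rmorph1 mul1r big1 ?addr0 // => l /negbTE ->.
by rewrite rmorph0 mul0r.
Qed.

Lemma sum_kdeltaD_realC (i j : 'I_d) (H : 'I_d -> C) :
  \sum_l realC (kdelta l i + kdelta l j) * H l = H i + H j.
Proof.
rewrite -(sum_kdelta_realC i) -(sum_kdelta_realC j) -big_split.
by apply: eq_bigr => l _; rewrite rmorphD mulrDl.
Qed.

Lemma sum_kdeltaB_realC (i j : 'I_d) (H : 'I_d -> C) :
  \sum_l realC (kdelta l i - kdelta l j) * H l = H i - H j.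
Proof.
rewrite -(sum_kdelta_realC i) -(sum_kdelta_realC j) -sumrB.
by apply: eq_bigr => l _; rewrite rmorphB mulrBl.
Qed.

Local Notation fam0 := (@ord0 5).
Local Notation fam1 := (lift (@ord0 5) (@ord0 4)).
Local Notation fam2 := (lift (@ord0 5) (lift (@ord0 4) (@ord0 3))).

Lemma sum_product_terms (G : term -> R) : \sum_(r | (family r < 3)%N) G r =
  \sum_i \sum_j (G (fam0, i, j) + G (fam1, i, j) + G (fam2, i, j)).
Proof.
rewrite big_mkcond sum_term !big_ord_recl big_ord0 /= !big1_eq !addr0.
by rewrite !sumr2D addrA.
Qed.

Section ProductContraction.
Variables (m : nat) (psi : T m.+1 -> T m.+1 -> C).
Local Notation M i j := (fun a b => psi (fcons i a) (fcons j b)).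

Lemma contract_family0 i j a b :
  contract (fam0, i, j) psi a b = realC (1 - kdelta i j) * M i j a b.
Proof.
rewrite contract_product //= sum_kdelta_realC.
by under eq_bigr do rewrite rmorphM -mulrA; rewrite -mulr_sumr sum_kdelta_realC.
Qed.

Lemma contract_family1 i j a b : contract (fam1, i, j) psi a b =
  (M i i a b - M j j a b) + (M j i a b - M i j a b).
Proof. by rewrite contract_product //= sum_kdeltaD_realC !sum_kdeltaB_realC; ring. Qed.

Lemma contract_family2 i j a b : contract (fam2, i, j) psi a b =
  (M i i a b - M j j a b) - (M j i a b - M i j a b).
Proof. by rewrite contract_product //= sum_kdeltaB_realC !sum_kdeltaD_realC; ring. Qed.

Lemma sqnorm_blocks : sqnorm psi = \sum_i \sum_j sqnorm (M i j).
Proof.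
rewrite /sqnorm sum_ffunS; apply: eq_bigr => i _.
by under eq_bigr do rewrite sum_ffunS; rewrite exchange_big.
Qed.

Lemma sqnorm_diag_blocks_diff :
  \sum_i \sum_j sqnorm (fun a b => M i i a b - M j j a b)
  = 2 * d%:R * \sum_i sqnorm (M i i) - 2 * sqnorm (fun a b => \sum_i M i i a b).
Proof.
have sum4_exchange (I J K L : finType) (F : I -> J -> K -> L -> R) :
    \sum_i \sum_j \sum_k \sum_l F i j k l = \sum_k \sum_l \sum_i \sum_j F i j k l.
  under eq_bigr do rewrite exchange_big /=.
  rewrite exchange_big /=; apply: eq_bigr => k _.
  by under eq_bigr do rewrite exchange_big /=; rewrite exchange_big.
rewrite /sqnorm sum4_exchange.
under eq_bigr do under eq_bigr do rewrite (sum_sqmod_diff (fun i => M i i _ _)).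
under eq_bigr do rewrite sumrB -!mulr_sumr.
rewrite sumrB -!mulr_sumr; congr (_ * _ - _).
by under eq_bigr do rewrite exchange_big /=; rewrite exchange_big.
Qed.

Lemma sqnorm_contract_family0 i j :
  sqnorm (contract (fam0, i, j) psi) = (1 - kdelta i j) * sqnorm (M i j).
Proof.
rewrite /sqnorm mulr_sumr; apply: eq_bigr => a _; rewrite mulr_sumr.
by apply: eq_bigr => b _; rewrite contract_family0 sqmod_realCM kdelta_idem.
Qed.

Lemma sqnorm_contract_family12 i j :
  sqnorm (contract (fam1, i, j) psi) + sqnorm (contract (fam2, i, j) psi) =
  2 * sqnorm (fun a b => M i i a b - M j j a b)
  + 2 * sqnorm (fun a b => M j i a b - M i j a b).
Proof.
rewrite /sqnorm -big_split !mulr_sumr -big_split; apply: eq_bigr => a _ /=.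
rewrite -big_split !mulr_sumr -big_split; apply: eq_bigr => b _ /=.
by rewrite contract_family1 contract_family2 sqmod_parallelogram.
Qed.

(* Family 0 recovers the off-diagonal blocks M i j, families 1-2 recover the
   differences M i i - M j j, and these control the diagonal blocks through
   [sqnorm_diag_blocks_diff] and [sqnorm_phi_contract_le]. *)
Lemma sqnorm_product_contract_ge : (3 <= d)%N -> rank_le2 psi ->
  1 / 3 * sqnorm psi <= \sum_(r | (family r < 3)%N) sqnorm (contract r psi).
Proof.
move=> d_ge3 psi_rank.
set Off := \sum_i \sum_j (1 - kdelta i j) * sqnorm (M i j).
set Diag := \sum_i sqnorm (M i i).
set Diff := \sum_i \sum_j sqnorm (fun a b => M i i a b - M j j a b).
have psi_split : sqnorm psi = Off + Diag.
  rewrite sqnorm_blocks /Off /Diag -(sum_kdelta_diag (fun i j => sqnorm (M i j))) -sumr2D.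
  by apply: eq_bigr => i _; apply: eq_bigr => j _; ring.
have Diff_ge : 2 * d%:R * Diag - 4 * sqnorm psi <= Diff.
  have := sqnorm_phi_contract_le psi_rank.
  by rewrite /Diff sqnorm_diag_blocks_diff -/Diag; lra.
have Off_ge0 : 0 <= Off.
  do 2!apply: sumr_ge0 => ? _; apply: mulr_ge0; last exact: sqnorm_ge0.
  by rewrite -kdelta_idem sqr_ge0.
have Diag_ge0 : 0 <= Diag by apply: sumr_ge0 => i _; exact: sqnorm_ge0.
have Diff_ge0 : 0 <= Diff by do 2!apply: sumr_ge0 => ? _; exact: sqnorm_ge0.
have dDiag_ge : 3 * Diag <= d%:R * Diag by rewrite ler_wpM2r // (ler_nat R 3 d).
have contract_ge : Off + 2 * Diff <= \sum_(r | (family r < 3)%N) sqnorm (contract r psi).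
  rewrite sum_product_terms /Off /Diff -sumr2Z -sumr2D.
  apply: ler_sum => i _; apply: ler_sum => j _.
  rewrite sqnorm_contract_family0 -addrA sqnorm_contract_family12 lerD2l lerDl.
  by rewrite mulr_ge0 ?sqnorm_ge0.
apply: le_trans contract_ge; rewrite psi_split in Diff_ge *.
lra.
Qed.

End ProductContraction.

Lemma sum_all_product_overlap_ge m (psi : T m -> T m -> C) : (3 <= d)%N -> rank_le2 psi ->
  (1 / 3) ^+ m * sqnorm psi
  <= \sum_(t : {ffun 'I_m -> term} | all_product t) sqmod (overlap t psi).
Proof.
move=> d_ge3; elim: m psi => [|m IH] psi psi_rank.
  pose a0 : T 0 := ffun0 (card_ord 0).
  pose t0 : {ffun 'I_0 -> term} := ffun0 (card_ord 0).
  rewrite expr0 mul1r /sqnorm (sum_ffun0 _ a0) (sum_ffun0 _ a0) big_mkcond (sum_ffun0 _ t0).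
  have -> : all_product t0 by apply/forallP => -[].
  by rewrite /overlap (sum_ffun0 _ a0) (sum_ffun0 _ a0) /tvec_pow big_ord0 rmorph1 mul1r.
rewrite sum_all_product.
under eq_bigr do under eq_bigr do rewrite overlap_fcons.
apply: le_trans (ler_sum _ (fun r r_prod => IH _ (rank_le2_contract r_prod psi_rank))).
rewrite -mulr_sumr exprSr -mulrA ler_wpM2l ?exprn_ge0 ?divr_ge0 //.
exact: sqnorm_product_contract_ge.
Qed.

End Contraction.

(** * The lower bound *)

Lemma prod_drop_small_ge (R : realDomainType) (I : finType) (P : pred I) (F : I -> R)
    (eps : R) :
  0 <= eps -> (forall k, `|F k| <= 1) -> (forall k, P k -> `|F k| <= eps) ->
  \prod_k (if P k then 0 else F k) - eps <= \prod_k F k.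
Proof.
move=> eps_ge0 F_le1 F_small.
have [k0 Pk0|noP] := pickP P; last first.
  by rewrite (eq_bigr F) ?lerBlDr ?lerDl // => k _; rewrite noP.
rewrite (bigD1 k0) //= Pk0 mul0r sub0r lerNl.
apply: le_trans (ler_norm _) _; rewrite normrN.
apply: le_trans (F_small _ Pk0); rewrite (bigD1 k0) //= normrM.
rewrite -[leRHS]mulr1 ler_wpM2l // normr_prod; apply: prodr_ile1 => k _.
by rewrite normr_ge0 F_le1.
Qed.

Lemma exists_small_eps (R : realFieldType) (e K L : R) : 0 < e -> 0 < K -> 0 <= L ->
  exists2 eps0 : R, 0 < eps0 &
    forall eps, 0 <= eps -> eps <= eps0 -> eps <= e /\ eps * L <= K.
Proof.
move=> e_gt0 K_gt0 L_ge0; have L1_gt0 : 0 < L + 1 by lra.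
exists (Order.min e (K / (L + 1))) => [|eps eps_ge0]; first by rewrite lt_min e_gt0 divr_gt0.
rewrite le_min ler_pdivlMr // => /andP[-> epsL1_le]; split=> //.
by apply: le_trans epsL1_le; rewrite ler_wpM2l // lerDl.
Qed.

Section SchmidtRank.
Variables (R : rcfType) (d m : nat).

Lemma schmidt_rank2_rank_le2 (psi : tidx d m -> tidx d m -> R[i]) :
  schmidt_rank psi = 2%N -> rank_le2 psi.
Proof.
rewrite /schmidt_rank.
set A := \matrix_(i, j) psi (enum_val i) (enum_val j) => rankA.
have := mulmx_base A; move: (col_base A) (row_base A); rewrite rankA => cb rb /matrixP AE.
exists (fun a => cb (enum_rank a) ord0), (fun b => rb ord0 (enum_rank b)),
       (fun a => cb (enum_rank a) (lift ord0 ord0)),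
       (fun b => rb (lift ord0 ord0) (enum_rank b)).
move=> a b; have := AE (enum_rank a) (enum_rank b).
by rewrite /A !mxE !enum_rankK => <-; rewrite !big_ord_recl big_ord0 addr0.
Qed.

End SchmidtRank.

Section LowerBound.
Variables (R : rcfType) (d n : nat).
Local Notation C := R[i].
Local Notation T := (tidx d n).
Local Notation tuples := {ffun 'I_n -> term d}.

Definition tvec_mass : R := \sum_(t : tuples) \sum_a \sum_b tvec_pow t a b ^+ 2.

Lemma tvec_mass_ge0 : 0 <= tvec_mass.
Proof. by do 3!apply: sumr_ge0 => ? _; apply: sqr_ge0. Qed.

Lemma sqmod_overlap_le (t : tuples) (psi : T -> T -> C) :
  sqmod (overlap t psi) <= (\sum_a \sum_b tvec_pow t a b ^+ 2) * sqnorm psi.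
Proof.
rewrite /overlap /sqnorm !pair_big /=; apply: le_trans (cauchy_schwarz _ _) _.
by rewrite (eq_bigr (fun p => tvec_pow t p.1 p.2 ^+ 2)) // => p _; exact: sqmod_realC.
Qed.

Lemma nonneg_weighted_overlaps_ge (w : term d -> R) (eta : R) (psi : T -> T -> C) :
  (3 <= d)%N -> rank_le2 psi -> 0 <= eta ->
  (forall r, 0 <= w r) -> (forall r, (family r < 3)%N -> eta <= w r) ->
  (eta / 3) ^+ n * sqnorm psi <= \sum_(t : tuples) (\prod_k w (t k)) * sqmod (overlap t psi).
Proof.
move=> d_ge3 psi_rank eta_ge0 w_ge0 w_prod.
have -> : (eta / 3) ^+ n = eta ^+ n * (1 / 3) ^+ n by rewrite -exprMn mul1r.
rewrite -mulrA; apply: le_trans (ler_wpM2l (exprn_ge0 _ eta_ge0)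
                                  (sum_all_product_overlap_ge d_ge3 psi_rank)) _.
rewrite mulr_sumr [leRHS](bigID (fun t => all_product t)) /= -[leLHS]addr0.
apply: lerD; last by apply: sumr_ge0 => t _; rewrite mulr_ge0 ?prodr_ge0 ?sqmod_ge0.
apply: ler_sum => t /forallP t_prod; rewrite ler_wpM2r ?sqmod_ge0 //.
rewrite -[n in eta ^+ n]card_ord -prodr_const.
by apply: ler_prod => k _; rewrite eta_ge0 w_prod.
Qed.

(* The weights of family 5 are negative but at most [eps] in size: replacing them by
   0 changes each product of weights by at most [eps]. *)
Lemma weighted_overlaps_ge (w : term d -> R) (eta eps : R) (psi : T -> T -> C) :
  (3 <= d)%N -> rank_le2 psi -> 0 <= eta -> 0 <= eps ->
  (forall r, [/\ `|w r| <= 1, (family r < 3)%N -> eta <= w r,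
               family r != 5%N -> 0 <= w r & family r = 5%N -> `|w r| <= eps]) ->
  ((eta / 3) ^+ n - eps * tvec_mass) * sqnorm psi
  <= \sum_(t : tuples) (\prod_k w (t k)) * sqmod (overlap t psi).
Proof.
move=> d_ge3 psi_rank eta_ge0 eps_ge0 w_bounds.
pose w0 r := if family r == 5%N then 0 else w r.
have w0_ge0 r : 0 <= w0 r.
  by rewrite /w0; case: eqP => // /eqP r_not5; case: (w_bounds r) => _ _ /(_ r_not5).
have w0_prod r : (family r < 3)%N -> eta <= w0 r.
  move=> r_prod; rewrite /w0 ifF; first by case: (w_bounds r) => _ /(_ r_prod).
  by apply/eqP => r5; rewrite r5 in r_prod.
have drop_ge (t : tuples) : \prod_k w0 (t k) - eps <= \prod_k w (t k).
  apply: prod_drop_small_ge => // k; first by case: (w_bounds (t k)).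
  by move=> /eqP r5; case: (w_bounds (t k)) => _ _ _ /(_ r5).
have := nonneg_weighted_overlaps_ge d_ge3 psi_rank eta_ge0 w0_ge0 w0_prod.
set X0 := \sum_(t : tuples) _; set Xall := \sum_(t : tuples) sqmod (overlap t psi).
have drop_total : X0 - eps * Xall
    <= \sum_(t : tuples) (\prod_k w (t k)) * sqmod (overlap t psi).
  rewrite /X0 /Xall mulr_sumr -sumrB; apply: ler_sum => t _.
  by rewrite -mulrBl ler_wpM2r ?sqmod_ge0.
have Xall_le : Xall <= tvec_mass * sqnorm psi.
  by rewrite /Xall /tvec_mass mulr_suml; apply: ler_sum => t _; apply: sqmod_overlap_le.
have := ler_wpM2l eps_ge0 Xall_le; rewrite mulrBl mulrA; lra.
Qed.

End LowerBound.

Section RhoWeights.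
Variables (R : rcfType) (d : nat).
Hypothesis d_ge3 : (3 <= d)%N.
Local Notation D := (d%:R : R).

Let natr_d_ge3 : 3 <= D. Proof. by rewrite (ler_nat R 3 d). Qed.
Let D_neq0 : D != 0. Proof. by apply: lt0r_neq0; have := natr_d_ge3; lra. Qed.
Let D1_neq0 : D - 1 != 0. Proof. by apply: lt0r_neq0; have := natr_d_ge3; lra. Qed.

Definition cmax : R := 1 / (D * (D - 1)).

Lemma cmax_bounds : 0 < cmax <= 1 / 6.
Proof.
have D_ge3 := natr_d_ge3; have DD_ge6 : 6 <= D * (D - 1) by nra.
have cmax_gt0 : 0 < cmax by rewrite /cmax divr_gt0 //; lra.
by rewrite cmax_gt0 /= /cmax ler_pdivrMr; lra.
Qed.

Definition rho_weight (c eps : R) : term d -> R :=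
  tcoef (wdiag d c eps) (wsing d eps) c ((cmax - c) / 18).

Variables (c eps : R).

Lemma wdiag_wid :
  wdiag d c eps - c + wid (wsing d eps) c = (D * (cmax - c) - (D - 2) * eps) / 2.
Proof. by rewrite /wdiag /wid /wsing /cmax; field; rewrite D_neq0 D1_neq0. Qed.

Lemma rho_weight5 :
  (wphi (wsing d eps) c + (wdiag d c eps - c + wid (wsing d eps) c) / D) / D
  = - (eps * ((D - 1) / (D * D))).
Proof. by rewrite wdiag_wid /wphi /wsing /cmax; field; rewrite D_neq0 D1_neq0. Qed.

Lemma rho_weight3_bounds : 0 <= c -> 0 <= eps -> eps <= (cmax - c) / 2 ->
  0 <= ((D * (cmax - c) - (D - 2) * eps) / 2 - 4 * D * ((cmax - c) / 18)) / (2 * D) <= 1.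
Proof.
move=> c_ge0 eps_ge0 eps_le; have D_ge3 := natr_d_ge3; have /andP[_ cmax_le] := cmax_bounds.
have delta_ge0 : 0 <= cmax - c by lra.
have delta_le : cmax - c <= 1 / 6 by lra.
have Ddelta_ge0 : 0 <= D * (cmax - c) by apply: mulr_ge0; lra.
have Ddelta_le : D * (cmax - c) <= D * (1 / 6) by apply: ler_wpM2l; lra.
have D2eps_ge0 : 0 <= (D - 2) * eps by apply: mulr_ge0; lra.
have D2eps_le : (D - 2) * eps <= (D - 2) * ((cmax - c) / 2) by apply: ler_wpM2l; lra.
have w3_ge0 : 0 <= (D * (cmax - c) - (D - 2) * eps) / 2 - 4 * D * ((cmax - c) / 18) by nra.
have w3_le : (D * (cmax - c) - (D - 2) * eps) / 2 - 4 * D * ((cmax - c) / 18) <= 2 * D by nra.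
by rewrite divr_ge0 ?ler_pdivrMr ?mul1r //=; lra.
Qed.

Lemma rho_weight_bounds (r : term d) : 0 <= c -> 0 <= eps -> eps <= (cmax - c) / 2 ->
  [/\ `|rho_weight c eps r| <= 1,
      (family r < 3)%N -> (cmax - c) / 18 <= rho_weight c eps r,
      family r != 5%N -> 0 <= rho_weight c eps r
    & family r = 5%N -> `|rho_weight c eps r| <= eps].
Proof.
move=> c_ge0 eps_ge0 eps_le.
have D_ge3 := natr_d_ge3; have /andP[_ cmax_le] := cmax_bounds.
have ratio_ge0 : 0 <= (D - 1) / (D * D) by apply: divr_ge0; nra.
have ratio_le1 : (D - 1) / (D * D) <= 1 by rewrite ler_pdivrMr; nra.
have := ler_wpM2l eps_ge0 ratio_le1; have := mulr_ge0 eps_ge0 ratio_ge0.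
rewrite mulr1 => eps_ratio_ge0 eps_ratio_le.
have /andP[w3_ge0 w3_le1] := rho_weight3_bounds c_ge0 eps_ge0 eps_le.
case: r => [[[k k_lt] i] j]; rewrite /rho_weight /tcoef /family /=.
case: k k_lt => [|[|[|[|[|[|k]]]]]] k_lt //=; rewrite ?ler_norml.
- by rewrite /wid /wsing -/cmax; split => [|_|_|//]; first (apply/andP; split); lra.
- by split => [|_|_|//]; first (apply/andP; split); lra.
- by split => [|_|_|//]; first (apply/andP; split); lra.
- by rewrite wdiag_wid; split => [|//|_|//]; first (apply/andP; split); lra.
- by split => [|//|_|//]; first (apply/andP; split); lra.
- by rewrite rho_weight5; split => [|//|//|_]; apply/andP; split; lra.
Qed.

End RhoWeights.

Theorem mainTheorem10 (R : rcfType) (d n : nat) (c : R) :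
  (3 <= d)%N -> (1 <= n)%N ->
  0 <= c -> c < 1 / (d%:R * (d%:R - 1)) ->
  exists eps0 : R, 0 < eps0 /\
    forall eps : R, 0 <= eps -> eps <= eps0 ->
      c + eps <= 1 / (d%:R * (d%:R - 1)) ->
      forall psi : tidx d n -> tidx d n -> R[i],
        schmidt_rank psi = 2%N ->
        0 <= expval (ptrans (rho d c eps)) psi.
Proof.
move=> d_ge3 _ c_ge0; rewrite -/(cmax R d) => c_lt.
pose eta := (cmax R d - c) / 18.
have eta_gt0 : 0 < eta by rewrite /eta; lra.
have [|//|eps0 eps0_gt0 eps0_small] :=
  exists_small_eps (e := (cmax R d - c) / 2) (K := (eta / 3) ^+ n) _ _ (tvec_mass_ge0 R d n).
- by lra.
- by rewrite exprn_gt0 //; lra.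
exists eps0; split=> // eps eps_ge0 eps_le _ psi psi_rank.
have [eps_small epsL_le] := eps0_small eps eps_ge0 eps_le.
rewrite (@expval_decomp _ _ _ _ (rho_weight c eps)) => [|x y]; last first.
  by rewrite ptrans_rho wop_decomp //; apply: leq_trans d_ge3.
rewrite ler0c; apply: le_trans (weighted_overlaps_ge d_ge3 (schmidt_rank2_rank_le2 psi_rank)
  (ltW eta_gt0) eps_ge0 (fun r => rho_weight_bounds d_ge3 r c_ge0 eps_ge0 eps_small)).
by rewrite mulr_ge0 ?sqnorm_ge0 // subr_ge0.
Qed.
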